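(* Let $p$ be a prime and let $a,b$ be integers, both coprime to $p$, with $a\neq 1$. For each $n\geq 1$, let $x_n$ denote the smallest positive integer satisfying $a^{x_n}\equiv b \pmod{p^n}$, when one exists. If $x_n$ exists for every $n\geq 1$, then the sequence $(x_n)_{n\geq 1}$ converges in the ring $\mathbb{Z}_p$ of $p$-adic integers, that is, with respect to the $p$-adic absolute value.
   Context: $\mathbb{Z}_p$ denotes the ring of $p$-adic integers, i.e. the completion of $\mathbb{Z}$ with respect to the $p$-adic metric $d(x,y)=e^{-v_p(x-y)}$. Here $v_p$ is the $p$-adic valuation. *)

From HB Require Import structures.
From mathcomp Require Import all_boot all_order all_algebra.
Set Implicit Arguments. Unset Strict Implicit. Unset Printing Implicit Defensive.
Import Order.TTheory GRing.Theory Num.Theory.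
Local Open Scope ring_scope.

Definition is_least_dlog (p : nat) (a b : int) (n x : nat) : Prop :=
  (0 < x)%N /\ (a ^+ x == b %[mod (p ^ n)%:Z])%Z /\
  (forall y : nat, (0 < y)%N -> (a ^+ y == b %[mod (p ^ n)%:Z])%Z -> (x <= y)%N).

(* A p-adic integer, represented (as the inverse limit of Z/p^k Z) by a
   coherent sequence of integer representatives l k of its residue mod p^k. *)
Definition padic_coherent (p : nat) (l : nat -> int) : Prop :=
  forall k : nat, (l k.+1 == l k %[mod (p ^ k)%:Z])%Z.

(* The integer sequence x converges in Z_p to the p-adic integer l:
   for every k, eventually x n = l mod p^k (i.e. |x n - l|_p <= p^-k). *)
Definition padic_limit (p : nat) (x : nat -> int) (l : nat -> int) : Prop :=
  forall k : nat, exists N : nat, forall n : nat, (N <= n)%N ->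
    (x n == l k %[mod (p ^ k)%:Z])%Z.

Definition padic_converges (p : nat) (x : nat -> int) : Prop :=
  exists l : nat -> int, padic_coherent p l /\ padic_limit p x l.

From HB Require Import structures.
From mathcomp Require Import all_boot all_order all_algebra.
Import Order.TTheory GRing.Theory Num.Theory.
Local Open Scope ring_scope.
From Stdlib Require Import Classical IndefiniteDescription.

(* The sequence [x] is nondecreasing, since a solution modulo [p^n] is also one
   modulo [p^m] for [m <= n].  If some positive power [a^D] equals [1], then
   [x n <= D], so [x] is eventually constant.  Otherwise, fix [k] and let
   [D = (p-1) p^k]; then [m = |a^D - 1|] is so large that [p^m] does not divide
   [a^D - 1].  The order [o] of [a] modulo [p^m] divides [(p-1) p^m] (Fermat and
   lifting the exponent) but not [D], so [p^k] divides [o].  For [n >= m] we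
   have [a^(x n) = a^(x m)] modulo [p^m], hence [o] and a fortiori [p^k] divide
   [x n - x m].  So [x] is p-adically Cauchy, hence convergent. *)

Lemma PoszX (m k : nat) : (m ^ k)%N%:Z = m%:Z ^+ k.
Proof. by rewrite -natz natrX natz. Qed.

Lemma eqz_mod_pexpn_leq {p m n : nat} {u v : int} : (m <= n)%N ->
  (u == v %[mod (p ^ n)%:Z])%Z -> (u == v %[mod (p ^ m)%:Z])%Z.
Proof.
move=> mn; rewrite !eqz_mod_dvd; apply: dvdz_trans.
by rewrite !PoszX dvdz_exp2l.
Qed.

Lemma dvdz_subrX1 (c : int) (n : nat) : (c - 1 %| c ^+ n - 1)%Z.
Proof. by rewrite subrX1 dvdz_mulr. Qed.

Lemma dvdz_exppS_sub1 (p i : nat) (c : int) : (0 < i)%N ->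
  (p%:Z ^+ i %| c - 1)%Z -> (p%:Z ^+ i.+1 %| c ^+ p - 1)%Z.
Proof.
move=> i_gt0 dvd_c; rewrite subrX1 exprSr dvdz_mul //.
have dvd_p : (p%:Z %| c - 1)%Z.
  by apply: dvdz_trans dvd_c; rewrite -[X in (X %| _)%Z]expr1 dvdz_exp2l.
(* [1 + c + ... + c^(p-1)] is congruent to [p] modulo [c - 1]. *)
have -> : \sum_(j < p) c ^+ j = \sum_(j < p) (c ^+ j - 1) + p%:Z.
  by rewrite sumrB sumr_const card_ord natz subrK.
rewrite rpredD ?dvdzz // rpred_sum // => j _.
exact: dvdz_trans dvd_p (dvdz_subrX1 c j).
Qed.

Lemma dvdz_exp_pexpn_sub1 {p : nat} (j : nat) {c : int} :
  (p%:Z %| c - 1)%Z -> (p%:Z ^+ j.+1 %| c ^+ (p ^ j) - 1)%Z.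
Proof.
move=> dvd_p; elim: j => [|j IHj]; first by rewrite expr1 expn0 expr1.
by rewrite expnSr exprM dvdz_exppS_sub1.
Qed.

Lemma fermatz {p : nat} {a : int} : prime p -> coprimez a p ->
  (p%:Z %| a ^+ p.-1 - 1)%Z.
Proof.
move=> p_pr cop_ap.
have p_gt0 : (0 < p)%N := prime_gt0 p_pr.
have dvd_p : (p%:Z %| a ^+ p - a)%Z.
  rewrite -eqz_mod_dvd -modzXm -[in X in _ == X]modz_mod.
  have [r ->] : exists r : nat, (a %% p%:Z)%Z = r%:Z.
    exists `|(a %% p%:Z)%Z|%N; rewrite gez0_abs // modz_ge0 //.
    by rewrite eqz_nat -lt0n.
  by rewrite -PoszX !modz_nat fermat_little.
move: dvd_p; have -> : a ^+ p - a = a * (a ^+ p.-1 - 1).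
  by rewrite mulrBr mulr1 -exprS prednK.
by rewrite Gauss_dvdzr // coprimez_sym.
Qed.

Lemma dvdz_exp_totient_pexpn_sub1 {p : nat} (m : nat) {a : int} : prime p ->
  coprimez a p -> (p%:Z ^+ m %| a ^+ (p.-1 * p ^ m) - 1)%Z.
Proof.
move=> p_pr cop_ap; rewrite exprM.
have := dvdz_exp_pexpn_sub1 m (fermatz p_pr cop_ap).
by apply: dvdz_trans; rewrite dvdz_exp2l.
Qed.

Lemma exp_sub1_order {M a : int} {W : nat} : (0 < W)%N ->
  (M %| a ^+ W - 1)%Z ->
  exists o : nat, forall y : nat, (M %| a ^+ y - 1)%Z <-> (o %| y)%N.
Proof.
move=> W_gt0 dvd_W.
have ex_o : exists y, (0 < y)%N && (M %| a ^+ y - 1)%Z.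
  by exists W; rewrite W_gt0.
case: (ex_minnP ex_o) => o /andP[o_gt0 dvd_o] o_min.
exists o => y; split => [dvd_y|/dvdnP[q ->]]; last first.
  by rewrite mulnC exprM (dvdz_trans dvd_o) ?dvdz_subrX1.
have dvd_r : (M %| a ^+ (y %% o) - 1)%Z.
  have -> : a ^+ (y %% o) - 1 =
      (a ^+ y - 1) - ((a ^+ o) ^+ (y %/ o) - 1) * a ^+ (y %% o).
    have -> : a ^+ y = (a ^+ o) ^+ (y %/ o) * a ^+ (y %% o).
      by rewrite -exprM -exprD mulnC -divn_eq.
    by rewrite mulrBl mul1r opprB [RHS]addrC addrA subrK.
  by rewrite rpredB // dvdz_mulr // (dvdz_trans dvd_o) ?dvdz_subrX1.
apply: contraT; rewrite /dvdn -lt0n => r_gt0.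
by have := o_min _ (introT andP (conj r_gt0 dvd_r)); rewrite leqNgt ltn_pmod.
Qed.

Lemma prime_predn_mul_expn_gt0 {p : nat} (m : nat) :
  prime p -> (0 < p.-1 * p ^ m)%N.
Proof.
move=> p_pr; have p_gt1 := prime_gt1 p_pr.
have pm1_gt0 : (0 < p.-1)%N by rewrite -subn1 subn_gt0.
by rewrite muln_gt0 pm1_gt0 expn_gt0 ltnW.
Qed.

Lemma order_modz_pexpn {p : nat} (m : nat) {a : int} :
  prime p -> coprimez a p ->
  exists o : nat, (o %| p.-1 * p ^ m)%N /\
    forall y : nat, (p%:Z ^+ m %| a ^+ y - 1)%Z <-> (o %| y)%N.
Proof.
move=> p_pr cop_ap; have dvd_W := dvdz_exp_totient_pexpn_sub1 m p_pr cop_ap.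
have [o o_order] := exp_sub1_order (prime_predn_mul_expn_gt0 m p_pr) dvd_W.
by exists o; split => //; apply/o_order.
Qed.

Lemma dvdn_mul_pexpn_ndvd {p n m k o : nat} : prime p ->
  (o %| n * p ^ m)%N -> ~~ (p ^ k %| o)%N -> (o %| n * p ^ k)%N.
Proof.
move=> p_pr dvd_o ndvd_k.
have dvd_gcd : (o %| gcdn o (p ^ m) * n)%N.
  by rewrite muln_gcdl dvdn_gcd dvdn_mulr //= mulnC.
case/(dvdn_pfactor _ _ p_pr): (dvdn_gcdr o (p ^ m)) => j _ gcd_j.
have j_lt_k : (j < k)%N.
  rewrite ltnNge; apply: contra ndvd_k => k_le_j.
  by apply: dvdn_trans (dvdn_gcdl o (p ^ m)); rewrite gcd_j dvdn_exp2l.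
apply: dvdn_trans dvd_gcd _; rewrite gcd_j mulnC dvdn_mul //.
by rewrite dvdn_exp2l // ltnW.
Qed.

Lemma pexpn_absz_ndvdz {p : nat} {c : int} : (1 < p)%N -> c != 0 ->
  ~~ (p%:Z ^+ `|c|%N %| c)%Z.
Proof.
move=> p_gt1 c_neq0; rewrite dvdzE abszX /=; apply/negP.
by move=> /dvdn_leq; rewrite absz_gt0 => /(_ c_neq0); rewrite leqNgt ltn_expl.
Qed.

Lemma dvdz_expB_sub1 {M a b : int} {u v : nat} : coprimez a M -> (u <= v)%N ->
  (a ^+ u == b %[mod M])%Z -> (a ^+ v == b %[mod M])%Z ->
  (M %| a ^+ (v - u) - 1)%Z.
Proof.
move=> cop_aM uv; rewrite !eqz_mod_dvd => dvd_u dvd_v.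
have : (M %| a ^+ u * (a ^+ (v - u) - 1))%Z.
  rewrite mulrBr mulr1 -exprD subnKC //.
  have -> : a ^+ v - a ^+ u = (a ^+ v - b) - (a ^+ u - b).
    by rewrite opprB addrA subrK.
  by rewrite rpredB.
by rewrite Gauss_dvdzr // coprimez_sym; apply: coprimezXl.
Qed.

Lemma nondecreasing_bounded_eventually_const {f : nat -> nat} {s D : nat} :
  (forall m n, (s <= m <= n)%N -> (f m <= f n)%N) ->
  (forall n, (s <= n)%N -> (f n <= D)%N) ->
  exists N, forall n, (N <= n)%N -> f n = f N.
Proof.
move=> f_mono f_bnd.
suff eventually_const c t : (s <= t)%N ->
    (forall n, (t <= n)%N -> (f n <= f t + c)%N) ->
    exists N, forall n, (N <= n)%N -> f n = f N.
  apply: (eventually_const (D - f s)%N s (leqnn s)) => n sn.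
  by rewrite subnKC ?f_bnd.
elim: c t => [|c IHc] t st bnd_t.
  exists t => n tn; apply/eqP; rewrite eqn_leq -[f t]addn0 bnd_t //=.
  by rewrite addn0 f_mono ?st.
case: (classic (exists n, (t <= n)%N /\ f n <> f t)) => [[n0 [tn0 fn0]]|const].
  have sn0 : (s <= n0)%N := leq_trans st tn0.
  have lt_t : (f t < f n0)%N.
    by rewrite ltn_neqAle f_mono ?st // andbT; apply/eqP => /esym.
  apply: (IHc n0 sn0) => n n0n.
  apply: leq_trans (bnd_t n (leq_trans tn0 n0n)) _.
  by rewrite addnS -addSn leq_add2r.
by exists t => n tn; apply: NNPP => fn; apply: const; exists n.
Qed.

Lemma padic_cauchy_converges (p : nat) (y : nat -> int) :
  (forall k, exists N, forall n, (N <= n)%N ->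
     (y n == y N %[mod (p ^ k)%:Z])%Z) ->
  padic_converges p y.
Proof.
move=> /functional_choice[N y_cauchy].
(* Cumulative sums make the moduli thresholds nondecreasing. *)
pose Nm k := (\sum_(i < k.+1) N i)%N.
have N_le_Nm k : (N k <= Nm k)%N by rewrite /Nm big_ord_recr leq_addl.
have Nm_le_NmS k : (Nm k <= Nm k.+1)%N.
  by rewrite /Nm [X in (_ <= X)%N]big_ord_recr leq_addr.
have y_Nm k n : (Nm k <= n)%N -> (y n == y (Nm k) %[mod (p ^ k)%:Z])%Z.
  move=> kn; rewrite (eqP (y_cauchy k n (leq_trans (N_le_Nm k) kn))).
  by rewrite (eqP (y_cauchy k _ (N_le_Nm k))).
exists (fun k => y (Nm k)); split => k; first exact: y_Nm.
by exists (Nm k); apply: y_Nm.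
Qed.

Section LeastDiscreteLogarithm.

Context {p : nat} {a b : int} {x : nat -> nat}.
Hypotheses (p_pr : prime p) (cop_ap : coprimez a p)
  (x_least : forall n, (1 <= n)%N -> is_least_dlog p a b n (x n)).

Lemma least_dlog_nondecreasing m n : (1 <= m <= n)%N -> (x m <= x n)%N.
Proof.
case/andP=> m_gt0 mn; have [_ [_ x_min]] := x_least _ m_gt0.
have [xn_gt0 [x_n _]] := x_least _ (leq_trans m_gt0 mn).
exact: x_min xn_gt0 (eqz_mod_pexpn_leq mn x_n).
Qed.

Lemma least_dlog_le_order {D : nat} : (0 < D)%N -> a ^+ D = 1 ->
  forall n, (1 <= n)%N -> (x n <= D)%N.
Proof.
move=> D_gt0 aD n n_gt0; have [xn_gt0 [x_n x_min]] := x_least _ n_gt0.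
rewrite leqNgt; apply/negP => D_lt_xn.
have a_xnD : a ^+ (x n - D) = a ^+ x n.
  by rewrite -[in RHS](subnK (ltnW D_lt_xn)) exprD aD mulr1.
have := x_min (x n - D)%N; rewrite subn_gt0 a_xnD => /(_ D_lt_xn x_n).
by rewrite leqNgt ltn_subrL D_gt0 xn_gt0.
Qed.

Lemma least_dlog_cauchy_of_infinite_order k :
  (forall D, (0 < D)%N -> a ^+ D != 1) ->
  exists N, forall n, (N <= n)%N -> ((x n)%:Z == (x N)%:Z %[mod (p ^ k)%:Z])%Z.
Proof.
move=> a_inf; pose D := (p.-1 * p ^ k)%N.
have aD_neq0 : a ^+ D - 1 != 0.
  by rewrite subr_eq0 a_inf ?prime_predn_mul_expn_gt0.
pose m := `|a ^+ D - 1|%N.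
have m_gt0 : (0 < m)%N by rewrite absz_gt0.
have [o [o_dvd o_order]] := order_modz_pexpn m p_pr cop_ap.
have pk_dvd_o : (p ^ k %| o)%N.
  apply: contraNT (pexpn_absz_ndvdz (prime_gt1 p_pr) aD_neq0) => pk_ndvd_o.
  exact/o_order/(dvdn_mul_pexpn_ndvd p_pr o_dvd pk_ndvd_o).
exists m => n mn.
have x_mn : (x m <= x n)%N by apply: least_dlog_nondecreasing; rewrite m_gt0.
have [_ [x_m _]] := x_least _ m_gt0.
have [_ [/(eqz_mod_pexpn_leq mn) x_n _]] := x_least _ (leq_trans m_gt0 mn).
rewrite PoszX in x_m x_n.
have := dvdz_expB_sub1 (coprimezXr m cop_ap) x_mn x_m x_n.
move=> /o_order /(dvdn_trans pk_dvd_o).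
by rewrite eqz_mod_dvd subzn // dvdzE.
Qed.

End LeastDiscreteLogarithm.

Theorem mainTheorem1 (p : nat) (a b : int) (x : nat -> nat) :
  prime p -> coprimez a p%:Z -> coprimez b p%:Z -> a != 1 ->
  (forall n : nat, (1 <= n)%N -> is_least_dlog p a b n (x n)) ->
  padic_converges p (fun n => (x n)%:Z).
Proof.
move=> p_pr cop_ap _ _ x_least; apply: padic_cauchy_converges => k.
have [[D [D_gt0 aD]]|a_inf] := classic (exists D, (0 < D)%N /\ a ^+ D = 1).
  have [N x_const] := nondecreasing_bounded_eventually_const
    (least_dlog_nondecreasing x_least) (least_dlog_le_order x_least D_gt0 aD).
  by exists N => n Nn; rewrite x_const.
apply: least_dlog_cauchy_of_infinite_order p_pr cop_ap x_least k _ => D D_gt0.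
by apply/eqP => aD; apply: a_inf; exists D.
Qed.
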